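(* Let $p,q\ge1$, $N>\max(p,q)$, let $\mu$ be a $q\times p$ matrix of measures, and assume $\mathscr M_N$ admits a Gauss--Borel factorization $\mathscr M_N=\mathscr L_N^{-1}\mathscr U_N^{-1}$ (with $\mathscr L_n,\mathscr U_n$, $n\le N$, the leading principal submatrices). Define \[\mathscr T_N:=\mathscr L_N\Lambda^{[N,N+q]}_{[q]}\mathscr M^{[N+q,N]}\mathscr U_N,\quad \mathscr T^{[N-q,N]}:=\mathscr L_{N-q}\Lambda^{[N-q,N]}_{[q]}\mathscr L_N^{-1},\quad \mathscr T^{[N,N-p]}:=\mathscr U_N^{-1}\big(\Lambda^{[N-p,N]}_{[p]}\big)^\top\mathscr U_{N-p}.\] Then $\mathscr T_N\in\mathbb R^{N\times N}$, $\mathscr T^{[N-q,N]}\in\mathbb R^{(N-q)\times N}$ and $\mathscr T^{[N,N-p]}\in\mathbb R^{N\times(N-p)}$ are banded matrices with $q$ superdiagonals and $p$ subdiagonals, i.e. their $(i,j)$ entries vanish unless $-p\le j-i\le q$.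
   Context: All matrices are indexed from $0$. $\mu$ is a $q\times p$ matrix of real measures with finite moments. For $r,n\ge1$, $X^{[n]}_{[r]}(x)$ is the $n\times r$ matrix whose row $k$ is $x^{\lfloor k/r\rfloor}e_{k\bmod r}^\top$ ($e_0,\dots,e_{r-1}$ standard basis of $\mathbb R^r$). Moment matrices: $\mathscr M^{[n,m]}=\int X^{[n]}_{[q]}\,\mathrm d\mu\,(X^{[m]}_{[p]})^\top$, $\mathscr M_n=\mathscr M^{[n,n]}$. Gauss--Borel factorization: $\mathscr M_N=\mathscr L_N^{-1}\mathscr U_N^{-1}$, $\mathscr L_N$ nonsingular lower triangular, $\mathscr U_N$ nonsingular upper triangular. For $r,n\ge1$, $\Lambda^{[n,n+r]}_{[r]}$ is the $n\times(n+r)$ matrix with entries $\delta_{j,i+r}$. *)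

From HB Require Import structures.
From mathcomp Require Import all_boot all_order all_algebra.
From mathcomp Require Import all_classical all_reals all_analysis.
Set Implicit Arguments. Unset Strict Implicit. Unset Printing Implicit Defensive.
Import Order.TTheory GRing.Theory Num.Theory.
Local Open Scope ring_scope.

(* A real (signed) measure on R, given by its Jordan-type decomposition
   mu = muP - muN into two (positive) measures on the Borel sets of R. *)
Definition signed_int (R : realType)
  (muP muN : {measure set R -> \bar R}) (f : R -> R) : R :=
  Rintegral muP setT f - Rintegral muN setT f.

Definition finite_moments (R : realType) (mu : {measure set R -> \bar R}) :=
  forall j : nat, mu.-integrable setT (fun x : R => (x ^+ j)%:E).

Definition Xmat (R : realType) (r n : nat) (x : R) : 'M[R]_(n, r) :=
  \matrix_(k < n, a < r) (if (k %% r)%N == (a : nat) then x ^+ (k %/ r) else 0).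

(* M^{[n,m]} = \int X^{[n]}_{[q]} dmu (X^{[m]}_{[p]})^T, entrywise *)
Definition moment_mx (R : realType) (q p : nat)
  (muP muN : 'I_q -> 'I_p -> {measure set R -> \bar R}) (n m : nat)
  : 'M[R]_(n, m) :=
  \matrix_(k < n, l < m)
    \sum_(a < q) \sum_(b < p)
      signed_int (muP a b) (muN a b)
        (fun x => Xmat q n x k a * Xmat p m x l b).

Definition Lambda (R : ringType) (r n m : nat) : 'M[R]_(n, m) :=
  \matrix_(i < n, j < m) (((j : nat) == i + r)%N)%:R.

Definition mxnat (R : ringType) (m n : nat) (A : 'M[R]_(m, n)) (i j : nat) : R :=
  match @insub _ (fun k => (k < m)%N) 'I_m i, @insub _ (fun k => (k < n)%N) 'I_n j with
  | Some i', Some j' => A i' j'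
  | _, _ => 0
  end.

Definition lead (R : ringType) (N : nat) (n : nat) (A : 'M[R]_N) : 'M[R]_n :=
  \matrix_(i < n, j < n) mxnat A i j.

Definition lower_tri (R : ringType) (n : nat) (A : 'M[R]_n) :=
  forall i j : 'I_n, (i < j)%N -> A i j = 0.
Definition upper_tri (R : ringType) (n : nat) (A : 'M[R]_n) :=
  forall i j : 'I_n, (j < i)%N -> A i j = 0.

Definition banded (R : ringType) (p q m n : nat) (A : 'M[R]_(m, n)) :=
  forall (i : 'I_m) (j : 'I_n),
    ~~ ((i <= j + p)%N && (j <= i + q)%N) -> A i j = 0.
Arguments Lambda {R} r n m.

From HB Require Import structures.
From mathcomp Require Import all_boot all_order all_algebra.
From mathcomp Require Import all_classical all_reals all_analysis.
From mathcomp Require Import zify.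
Set Implicit Arguments. Unset Strict Implicit. Unset Printing Implicit Defensive.
Import Order.TTheory GRing.Theory Num.Theory.
Local Open Scope ring_scope.

(* The moments have a block Hankel symmetry: shifting the rows of the moment matrix by q is
   the same as shifting its columns by p, Lambda_q M^[n+q,m] = M^[n,m+p] (Lambda_p)^T.
   The Gauss-Borel factorization makes L M^[N,m] upper and M^[m,N] U lower triangular (for
   m = N they are U^-1 and L^-1, and every entry that must vanish lies in that N x N block).
   Each of the three matrices is written in two ways as a product of triangular factors,
   shifts Lambda and one of L M^[N,m], M^[m,N] U; since bandwidths add under multiplication,
   one form bounds the superdiagonals by q and the other the subdiagonals by p. *)

Section Bands.
Variable R : nzRingType.

Definition upper_band m n r (A : 'M[R]_(m, n)) :=
  forall (i : 'I_m) (j : 'I_n), (i + r < j)%N -> A i j = 0.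

Definition lower_band m n r (A : 'M[R]_(m, n)) :=
  forall (i : 'I_m) (j : 'I_n), (j + r < i)%N -> A i j = 0.

Definition mx_trunc (E : nat -> nat -> R) n m : 'M[R]_(n, m) :=
  \matrix_(k < n, l < m) E k l.

Lemma banded_lower_upper p q m n (A : 'M[R]_(m, n)) :
  lower_band p A -> upper_band q A -> banded p q A.
Proof.
by move=> Alo Aup i j; rewrite negb_and -!ltnNge => /orP[/Alo|/Aup].
Qed.

Lemma lower_tri_upper_band n (A : 'M[R]_n) : lower_tri A -> upper_band 0 A.
Proof. by move=> Alow i j; rewrite addn0; apply: Alow. Qed.

Lemma upper_tri_lower_band n (A : 'M[R]_n) : upper_tri A -> lower_band 0 A.
Proof. by move=> Aup i j; rewrite addn0; apply: Aup. Qed.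

Lemma tr_upper_band m n r (A : 'M[R]_(m, n)) :
  upper_band r A -> lower_band r A^T.
Proof. by move=> Aup i j lt_ji; rewrite mxE Aup. Qed.

Lemma tr_lower_band m n r (A : 'M[R]_(m, n)) :
  lower_band r A -> upper_band r A^T.
Proof. by move=> Alo i j lt_ij; rewrite mxE Alo. Qed.

Lemma upper_band_mulmx m n k r s (A : 'M[R]_(m, n)) (B : 'M[R]_(n, k)) :
  upper_band r A -> upper_band s B -> upper_band (r + s) (A *m B).
Proof.
move=> Aup Bup i j lt_ij; rewrite mxE big1 // => l _.
have [le_li|lt_il] := leqP l (i + r); last by rewrite Aup ?mul0r.
by rewrite Bup ?mulr0 //; lia.
Qed.

Lemma lower_band_mulmx m n k r s (A : 'M[R]_(m, n)) (B : 'M[R]_(n, k)) :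
  lower_band r A -> lower_band s B -> lower_band (r + s) (A *m B).
Proof.
move=> Alo Blo i j lt_ji; rewrite mxE big1 // => l _.
have [le_jl|lt_lj] := leqP l (j + s); last by rewrite Blo ?mulr0.
by rewrite Alo ?mul0r //; lia.
Qed.

Lemma Lambda_upper_band r n m : upper_band r (Lambda r n m : 'M[R]_(n, m)).
Proof. by move=> i j lt_ij; rewrite mxE (gtn_eqF lt_ij). Qed.

Lemma Lambda_lower_band r n m : lower_band 0 (Lambda r n m : 'M[R]_(n, m)).
Proof. by move=> i j; rewrite addn0 => lt_ji; rewrite mxE ltn_eqF // ltn_addr. Qed.

Lemma Lambda_mulmxE r n m k (B : 'M[R]_(m, k)) (i : 'I_n) j (lt_im : (i + r < m)%N) :
  (Lambda r n m *m B) i j = B (Ordinal lt_im) j.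
Proof.
rewrite mxE (bigD1 (Ordinal lt_im)) //= mxE eqxx mul1r big1 ?addr0 // => l ne_l.
by rewrite mxE; case: eqP => [e|]; [case/eqP: ne_l; apply: val_inj | rewrite mul0r].
Qed.

Lemma mulmx_trLambdaE r n m k (A : 'M[R]_(k, m)) i (j : 'I_n) (lt_jm : (j + r < m)%N) :
  (A *m (Lambda r n m)^T) i j = A i (Ordinal lt_jm).
Proof.
rewrite mxE (bigD1 (Ordinal lt_jm)) //= !mxE eqxx mulr1 big1 ?addr0 // => l ne_l.
by rewrite !mxE; case: eqP => [e|]; [case/eqP: ne_l; apply: val_inj | rewrite mulr0].
Qed.

Lemma Lambda_mul_trunc r n N m (E : nat -> nat -> R) : (n + r <= N)%N ->
  Lambda r n N *m mx_trunc E N m = mx_trunc (fun k l => E (k + r)%N l) n m.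
Proof.
move=> le_nN; apply/matrixP => i j.
have lt_iN : (i + r < N)%N by have := ltn_ord i; lia.
by rewrite (Lambda_mulmxE _ _ lt_iN) !mxE.
Qed.

Lemma trunc_mul_trLambda r n m M (E : nat -> nat -> R) : (m + r <= M)%N ->
  mx_trunc E n M *m (Lambda r m M)^T = mx_trunc (fun k l => E k (l + r)%N) n m.
Proof.
move=> le_mM; apply/matrixP => i j.
have lt_jM : (j + r < M)%N by have := ltn_ord j; lia.
by rewrite (mulmx_trLambdaE _ _ lt_jM) !mxE.
Qed.

Lemma Lambda0_mul_trunc n N m (E : nat -> nat -> R) : (n <= N)%N ->
  Lambda 0 n N *m mx_trunc E N m = mx_trunc E n m.
Proof.
by move=> le_nN; rewrite Lambda_mul_trunc ?addn0 //; apply/matrixP => i j; rewrite !mxE addn0.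
Qed.

Lemma trunc_mul_trLambda0 n m M (E : nat -> nat -> R) : (m <= M)%N ->
  mx_trunc E n M *m (Lambda 0 m M)^T = mx_trunc E n m.
Proof.
by move=> le_mM; rewrite trunc_mul_trLambda ?addn0 //; apply/matrixP => i j; rewrite !mxE addn0.
Qed.

Lemma leadE N n (le_nN : (n <= N)%N) (A : 'M[R]_N) i j :
  lead n A i j = A (widen_ord le_nN i) (widen_ord le_nN j).
Proof.
have lt_iN : (i < N)%N := leq_trans (ltn_ord i) le_nN.
have lt_jN : (j < N)%N := leq_trans (ltn_ord j) le_nN.
rewrite mxE /mxnat (insubT (fun k => (k < N)%N) lt_iN) (insubT (fun k => (k < N)%N) lt_jN).
by congr (A _ _); apply: val_inj.
Qed.

Lemma lower_tri_lead N n (A : 'M[R]_N) : (n <= N)%N -> lower_tri A -> lower_tri (lead n A).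
Proof. by move=> le_nN Alow i j lt_ij; rewrite (leadE le_nN) Alow. Qed.

Lemma upper_tri_lead N n (A : 'M[R]_N) : (n <= N)%N -> upper_tri A -> upper_tri (lead n A).
Proof. by move=> le_nN Aup i j lt_ji; rewrite (leadE le_nN) Aup. Qed.

Lemma lead_mulmx_Lambda0 N n (A : 'M[R]_N) : (n <= N)%N -> lower_tri A ->
  lead n A *m Lambda 0 n N = Lambda 0 n N *m A.
Proof.
move=> le_nN Alow; apply/matrixP => i j.
have lt_iN : (i + 0 < N)%N by rewrite addn0; apply: leq_trans le_nN.
rewrite (Lambda_mulmxE _ _ lt_iN) [LHS]mxE.
have [lt_jn|le_nj] := ltnP j n.
  rewrite (bigD1 (Ordinal lt_jn)) //= big1 => [|k ne_k].
    rewrite [Lambda _ _ _ _ _]mxE [X in _ == X]addn0 eqxx mulr1 addr0 (leadE le_nN).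
    by f_equal; apply: val_inj; rewrite /= ?addn0.
  rewrite [Lambda _ _ _ _ _]mxE [X in _ == X]addn0 eq_sym.
  by case: eqP => [e|]; [case/eqP: ne_k; apply: val_inj | rewrite mulr0].
rewrite big1 => [|k _]; first by rewrite Alow //=; have := ltn_ord i; lia.
by rewrite [Lambda _ _ _ _ _]mxE gtn_eqF ?mulr0 //; apply: leq_trans le_nj; rewrite addn0.
Qed.

Lemma mulmx_trLambda0_lead N n (A : 'M[R]_N) : (n <= N)%N -> upper_tri A ->
  A *m (Lambda 0 n N)^T = (Lambda 0 n N)^T *m lead n A.
Proof.
move=> le_nN Aup; apply/matrixP => i j.
have lt_jN : (j + 0 < N)%N by rewrite addn0; apply: leq_trans le_nN.
rewrite (mulmx_trLambdaE _ _ lt_jN) [RHS]mxE.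
have [lt_in|le_ni] := ltnP i n.
  rewrite (bigD1 (Ordinal lt_in)) //= big1 => [|k ne_k].
    rewrite [_^T _ _]mxE [Lambda _ _ _ _ _]mxE [X in _ == X]addn0 eqxx mul1r addr0.
    rewrite (leadE le_nN).
    by f_equal; apply: val_inj; rewrite /= ?addn0.
  rewrite [_^T _ _]mxE [Lambda _ _ _ _ _]mxE [X in _ == X]addn0.
  by case: eqP => [e|]; [case/eqP: ne_k; apply: val_inj | rewrite mul0r].
rewrite big1 => [|k _]; first by rewrite Aup //=; have := ltn_ord j; lia.
rewrite [_^T _ _]mxE [Lambda _ _ _ _ _]mxE gtn_eqF ?mul0r //.
by apply: leq_trans le_ni; rewrite addn0.
Qed.

End Bands.

Arguments Lambda_upper_band {R} r n m.
Arguments Lambda_lower_band {R} r n m.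

Section TriangularInverse.
Variable F : fieldType.

Lemma lower_tri_invmx n (A : 'M[F]_n) : lower_tri A -> A \in unitmx -> lower_tri (invmx A).
Proof.
move=> Alow Aunit i j; have [m lt_im] := ubnP i; elim: m i lt_im => // m IH i.
rewrite ltnS => le_im lt_ij.
have Aii_neq0 : A i i != 0.
  have : \det A != 0 by rewrite -unitfE -unitmxE.
  rewrite det_trig; last by apply/is_trig_mxP.
  by rewrite (bigD1 i) //= mulf_eq0 negb_or => /andP[].
have := congr1 (fun B : 'M[F]_n => B i j) (mulmxV Aunit).
rewrite !mxE (bigD1 i) //= big1 => [|k ne_ki].
  rewrite addr0 -val_eqE (ltn_eqF lt_ij) => /eqP.
  by rewrite mulf_eq0 (negbTE Aii_neq0) => /eqP.
have [lt_ik|lt_ki|/val_inj eq_ik] := ltngtP i k; first by rewrite Alow ?mul0r.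
  by rewrite IH ?mulr0 //; [apply: leq_trans le_im | apply: ltn_trans lt_ij].
by rewrite eq_ik eqxx in ne_ki.
Qed.

Lemma upper_tri_invmx n (A : 'M[F]_n) : upper_tri A -> A \in unitmx -> upper_tri (invmx A).
Proof.
move=> Aup Aunit i j lt_ji.
have ATlow : lower_tri A^T by move=> k l lt_kl; rewrite mxE Aup.
have := lower_tri_invmx ATlow; rewrite unitmx_tr => /(_ Aunit j i lt_ji).
by rewrite -trmx_inv mxE.
Qed.

End TriangularInverse.

Section GaussBorel.
Variables (F : fieldType) (p q N : nat) (E : nat -> nat -> F).
Hypothesis E_shift : forall k l, E (k + q)%N l = E k (l + p)%N.
Variables L U : 'M[F]_N.
Hypotheses (Llow : lower_tri L) (Lunit : L \in unitmx).
Hypotheses (Uup : upper_tri U) (Uunit : U \in unitmx).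
Hypothesis GB : mx_trunc E N N = invmx L *m invmx U.

Lemma mulmxL_trunc : L *m mx_trunc E N N = invmx U.
Proof. by rewrite GB mulmxA mulmxV // mul1mx. Qed.

Lemma trunc_mulmxU : mx_trunc E N N *m U = invmx L.
Proof. by rewrite GB -mulmxA mulVmx // mulmx1. Qed.

Lemma lower_band_mulmx_trunc m : lower_band 0 (L *m mx_trunc E N m).
Proof.
move=> i l; rewrite addn0 => lt_li.
have lt_lN : (l < N)%N := ltn_trans lt_li (ltn_ord i).
have -> : (L *m mx_trunc E N m) i l = (L *m mx_trunc E N N) i (Ordinal lt_lN).
  by rewrite !mxE; apply: eq_bigr => k _; rewrite !mxE.
by rewrite mulmxL_trunc upper_tri_invmx.
Qed.

Lemma upper_band_trunc_mulmx m : upper_band 0 (mx_trunc E m N *m U).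
Proof.
move=> k j; rewrite addn0 => lt_kj.
have lt_kN : (k < N)%N := ltn_trans lt_kj (ltn_ord j).
have -> : (mx_trunc E m N *m U) k j = (mx_trunc E N N *m U) (Ordinal lt_kN) j.
  by rewrite !mxE; apply: eq_bigr => l _; rewrite !mxE.
by rewrite trunc_mulmxU lower_tri_invmx.
Qed.

Lemma Lambda_mul_trunc_shift n m n' m' : (n + q <= n')%N -> (m + p <= m')%N ->
  Lambda q n n' *m mx_trunc E n' m = mx_trunc E n m' *m (Lambda p m m')^T.
Proof.
move=> le_nn' le_mm'; rewrite Lambda_mul_trunc // trunc_mul_trLambda //.
by apply/matrixP => i j; rewrite !mxE E_shift.
Qed.

Lemma banded_L_Lambda_moments_U :
  banded p q (L *m Lambda q N (N + q) *m mx_trunc E (N + q) N *m U).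
Proof.
apply: banded_lower_upper.
  have -> : L *m Lambda q N (N + q) *m mx_trunc E (N + q) N *m U =
            L *m mx_trunc E N (N + p) *m (Lambda p N (N + p))^T *m U.
    by rewrite -(mulmxA L) (Lambda_mul_trunc_shift (m' := N + p)) // mulmxA.
  have := lower_band_mulmx (lower_band_mulmx (lower_band_mulmx_trunc (m := N + p))
    (tr_upper_band (Lambda_upper_band p N (N + p)))) (upper_tri_lower_band Uup).
  by rewrite add0n addn0.
rewrite -!mulmxA.
have := upper_band_mulmx (lower_tri_upper_band Llow) (upper_band_mulmx
  (Lambda_upper_band q N (N + q)) (upper_band_trunc_mulmx (m := N + q))).
by rewrite add0n addn0.
Qed.

Lemma banded_lead_L_Lambda_invL : (q <= N)%N ->
  banded p q (lead (N - q) L *m Lambda q (N - q) N *m invmx L).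
Proof.
move=> le_qN; have le_N'N : (N - q <= N)%N := leq_subr q N.
apply: banded_lower_upper.
  have -> : lead (N - q) L *m Lambda q (N - q) N *m invmx L =
      Lambda 0 (N - q) N *m (L *m mx_trunc E N (N + p)) *m (Lambda p N (N + p))^T *m U.
    rewrite -trunc_mulmxU !mulmxA -(mulmxA (lead _ L)).
    rewrite (Lambda_mul_trunc_shift (m' := N + p)) ?subnK //.
    by rewrite -(Lambda0_mul_trunc (N + p) E le_N'N) !mulmxA lead_mulmx_Lambda0.
  have := lower_band_mulmx (lower_band_mulmx (lower_band_mulmx
    (Lambda_lower_band 0 (N - q) N) (lower_band_mulmx_trunc (m := N + p)))
    (tr_upper_band (Lambda_upper_band p N (N + p)))) (upper_tri_lower_band Uup).
  by rewrite !add0n addn0.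
have := upper_band_mulmx (upper_band_mulmx
  (lower_tri_upper_band (lower_tri_lead le_N'N Llow)) (Lambda_upper_band q (N - q) N))
  (lower_tri_upper_band (lower_tri_invmx Llow Lunit)).
by rewrite add0n addn0.
Qed.

Lemma banded_invU_trLambda_lead_U : (p <= N)%N ->
  banded p q (invmx U *m (Lambda p (N - p) N)^T *m lead (N - p) U).
Proof.
move=> le_pN; have le_N'N : (N - p <= N)%N := leq_subr p N.
apply: banded_lower_upper.
  have := lower_band_mulmx (lower_band_mulmx
    (upper_tri_lower_band (upper_tri_invmx Uup Uunit))
    (tr_upper_band (Lambda_upper_band p (N - p) N)))
    (upper_tri_lower_band (upper_tri_lead le_N'N Uup)).
  by rewrite add0n addn0.
have -> : invmx U *m (Lambda p (N - p) N)^T *m lead (N - p) U =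
    L *m Lambda q N (N + q) *m (mx_trunc E (N + q) N *m U) *m (Lambda 0 (N - p) N)^T.
  rewrite -mulmxL_trunc -(mulmxA L (mx_trunc E N N)).
  rewrite -(Lambda_mul_trunc_shift (n' := N + q)) ?subnK //.
  by rewrite -(trunc_mul_trLambda0 (N + q) E le_N'N) -!mulmxA mulmx_trLambda0_lead.
have := upper_band_mulmx (upper_band_mulmx (upper_band_mulmx
  (lower_tri_upper_band Llow) (Lambda_upper_band q N (N + q)))
  (upper_band_trunc_mulmx (m := N + q)))
  (tr_lower_band (Lambda_lower_band 0 (N - p) N)).
by rewrite add0n !addn0.
Qed.

End GaussBorel.

Section BlockMoments.
Variables (R : realType) (q p : nat).
Variables muP muN : 'I_q -> 'I_p -> {measure set R -> \bar R}.

Definition block_moment (k l : nat) : R :=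
  moment_mx muP muN k.+1 l.+1 ord_max ord_max.

Lemma moment_mxE n m : moment_mx muP muN n m = mx_trunc block_moment n m.
Proof.
apply/matrixP => i j; rewrite /block_moment !mxE.
apply: eq_bigr => a _; apply: eq_bigr => b _.
by congr signed_int; apply: boolp.funext => x; rewrite !mxE.
Qed.

Lemma block_moment_shift : (0 < q)%N -> (0 < p)%N ->
  forall k l, block_moment (k + q) l = block_moment k (l + p).
Proof.
move=> q_gt0 p_gt0 k l; rewrite /block_moment !mxE.
apply: eq_bigr => a _; apply: eq_bigr => b _.
congr signed_int; apply: boolp.funext => x; rewrite !mxE !modnDr.
have [-> ->] : ((k + q) %/ q = (k %/ q).+1 /\ (l + p) %/ p = (l %/ p).+1)%N.
  by rewrite !divnDr // !divnn q_gt0 p_gt0 !addn1.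
by case: eqP; case: eqP; rewrite ?mulr0 ?mul0r // -!exprD addSn addnS.
Qed.

End BlockMoments.

Theorem mainTheorem6 (R : realType) (p q N : nat)
  (hp : (1 <= p)%N) (hq : (1 <= q)%N) (hN : (maxn p q < N)%N)
  (muP muN : 'I_q -> 'I_p -> {measure set R -> \bar R})
  (hmuP : forall a b, finite_moments (muP a b))
  (hmuN : forall a b, finite_moments (muN a b))
  (L U : 'M[R]_N)
  (hLt : lower_tri L) (hLu : L \in unitmx)
  (hUt : upper_tri U) (hUu : U \in unitmx)
  (hGB : moment_mx muP muN N N = invmx L *m invmx U) :
  banded p q (L *m Lambda q N (N + q) *m moment_mx muP muN (N + q) N *m U)
  /\ banded p q (lead (N - q) L *m Lambda q (N - q) N *m invmx L)
  /\ banded p q (invmx U *m (Lambda p (N - p) N)^T *m lead (N - p) U).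
Proof.
have [le_pN le_qN] : (p <= N)%N /\ (q <= N)%N.
  by move: hN; rewrite gtn_max => /andP[/ltnW-> /ltnW->].
have shift := block_moment_shift muP muN hq hp.
rewrite !moment_mxE in hGB *.
split; [|split].
- exact: (banded_L_Lambda_moments_U (F := R) shift hLt hLu hUt hUu hGB).
- exact: (banded_lead_L_Lambda_invL (F := R) shift hLt hLu hUt hUu hGB le_qN).
- exact: (banded_invU_trLambda_lead_U (F := R) shift hLt hLu hUt hUu hGB le_pN).
Qed.
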